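(* Let $\underline{q}_g\le\bar{q}_g$ and $\underline{v}\le\bar{v}$ be real constants and let $v_0\in[\underline{v},\bar{v}]$. Define the set \[ S:=\{(q,v):\underline{q}_g\le q\le\bar{q}_g,\ v=v_0\}\cup\{(q,v):q=\bar{q}_g,\ \underline{v}\le v\le v_0\}\cup\{(q,v):q=\underline{q}_g,\ v_0\le v\le\bar{v}\}\subseteq\mathbb{R}^2, \] and, for $\epsilon>0$, let $S^\epsilon$ be the set of all $(q,v)\in\mathbb{R}^2$ for which there exist $v^+,v^-\in[0,\bar{v}-\underline{v}]$ such that \begin{align*} &v=v_0+v^+-v^-,\\ &v^+-\epsilon\ln\left[1+\exp\left(\frac{v^+-q+\underline{q}_g}{\epsilon}\right)\right]\le\epsilon\ln 2,\\ &v^--\epsilon\ln\left[1+\exp\left(\frac{v^-+q-\bar{q}_g}{\epsilon}\right)\right]\le\epsilon\ln 2,\\ &\underline{q}_g\le q\le\bar{q}_g,\quad \underline{v}\le v\le\bar{v}. \end{align*} Then for every $\epsilon>0$ we have $S\subseteq S^\epsilon$, and \[ \sup_{(q,v)\in S^\epsilon}\ \inf_{(q',v')\in S}\|(q,v)-(q',v')\|\to 0\quad\text{as }\epsilon\to 0. \]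
   Context: In the application, $q$ is the reactive power output of a generator in a contingency, $v$ the voltage magnitude at its bus in the contingency, $v_0$ the base-case voltage magnitude at that bus, $[\underline{q}_g,\bar{q}_g]$ the reactive power bounds and $[\underline{v},\bar{v}]$ the voltage bounds. The set $S$ models the disjunctive voltage/reactive-power response and $S^\epsilon$ is its smooth relaxation. *)

From HB Require Import structures.
From mathcomp Require Import all_boot all_order all_algebra.
From mathcomp Require Import all_classical all_reals all_analysis.
Set Implicit Arguments. Unset Strict Implicit. Unset Printing Implicit Defensive.
Import Order.TTheory GRing.Theory Num.Theory.
Import numFieldNormedType.Exports.
Local Open Scope classical_set_scope.
Local Open Scope ring_scope.

Definition Sset (R : realType) (qlo qhi vlo vhi v0 : R) : set (R * R) :=
  [set p | (qlo <= p.1 <= qhi /\ p.2 = v0)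
        \/ (p.1 = qhi /\ vlo <= p.2 <= v0)
        \/ (p.1 = qlo /\ v0 <= p.2 <= vhi)].

Definition Seps (R : realType) (qlo qhi vlo vhi v0 eps : R) : set (R * R) :=
  [set p | exists vp vm : R,
      (0 <= vp <= vhi - vlo) /\ (0 <= vm <= vhi - vlo) /\
      p.2 = v0 + vp - vm /\
      vp - eps * ln (1 + expR ((vp - p.1 + qlo) / eps)) <= eps * ln 2 /\
      vm - eps * ln (1 + expR ((vm + p.1 - qhi) / eps)) <= eps * ln 2 /\
      (qlo <= p.1 <= qhi) /\ (vlo <= p.2 <= vhi)].

Definition dist2 (R : realType) (p p' : R * R) : R :=
  Num.sqrt ((p.1 - p'.1) ^+ 2 + (p.2 - p'.2) ^+ 2).

Definition deviation (R : realType) (qlo qhi vlo vhi v0 eps : R) : \bar R :=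
  ereal_sup [set ereal_inf [set (dist2 p p')%:E | p' in Sset qlo qhi vlo vhi v0]
            | p in Seps qlo qhi vlo vhi v0 eps].

From HB Require Import structures.
From mathcomp Require Import all_boot all_order all_algebra.
From mathcomp Require Import all_classical all_reals all_analysis.
From mathcomp Require Import lra.

Set Implicit Arguments.
Unset Strict Implicit.
Unset Printing Implicit Defensive.
Import Order.TTheory GRing.Theory Num.Theory.
Import numFieldNormedType.Exports.
Local Open Scope classical_set_scope.
Local Open Scope ring_scope.

(* The scaled softplus [eps * ln (1 + e^(t/eps))] is squeezed between
   [max(0, t)] and [max(0, t) + eps ln 2].  Hence each smoothed constraint
   [x - softplus eps (x - c) <= eps ln 2] of S^eps lies between the
   complementarity condition [min(x, c) <= 0] and its relaxation
   [min(x, c) <= 2 eps ln 2].  With [x = v+, c = q - qlo] and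
   [x = v-, c = qhi - q], the first gives S ⊆ S^eps, and the second moves
   every point of S^eps horizontally or vertically onto S by at most
   [2 eps ln 2], which squeezes the deviation to 0. *)

Lemma ln2_gt0 (R : realType) : 0 < ln (2 : R).
Proof. by apply: ln_gt0; rewrite ltr1n. Qed.

Section Softplus.
Variables (R : realType) (eps : R).
Hypothesis eps_gt0 : 0 < eps.

Definition softplus (t : R) : R := eps * ln (1 + expR (t / eps)).

Definition smooth_compl (x c : R) : Prop :=
  x - softplus (x - c) <= eps * ln 2.

Lemma softplus_ge0 (t : R) : 0 <= softplus t.
Proof. by apply: mulr_ge0; [exact: ltW | rewrite ln_ge0 // lerDl expR_ge0]. Qed.

Lemma softplus_ge (t : R) : t <= softplus t.
Proof.
rewrite /softplus -ler_pdivrMl // mulrC -{1}(expRK (t / eps)).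
rewrite ler_ln ?posrE ?expR_gt0 ?addr_gt0 ?ltr01 ?lerDr //; exact: expR_gt0.
Qed.

Lemma softplus_le_ln2 (t : R) : t <= 0 -> softplus t <= eps * ln 2.
Proof.
move=> t_le0; rewrite ler_pM2l // ler_ln ?posrE ?addr_gt0 ?ltr01 ?expR_gt0 //.
have : expR (t / eps) <= 1 by rewrite expR_le1 pmulr_lle0 ?invr_gt0.
lra.
Qed.

Lemma softplus_le (t : R) : 0 <= t -> softplus t <= t + eps * ln 2.
Proof.
move=> t_ge0; have te_ge0 : 0 <= t / eps by rewrite divr_ge0 // ltW.
rewrite /softplus -{2}(divfK (lt0r_neq0 eps_gt0) t) [_ / _ * _]mulrC.
rewrite -mulrDr ler_pM2l //.
rewrite -{2}(expRK (t / eps)) -lnM ?posrE ?expR_gt0 //.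
rewrite ler_ln ?posrE ?addr_gt0 ?ltr01 ?expR_gt0 ?mulr_gt0 //;
  last exact: expR_gt0.
have := expR_ge1Dx (t / eps); lra.
Qed.

Lemma smooth_complI (x c : R) : x <= 0 \/ c <= 0 -> smooth_compl x c.
Proof.
have e_ln2 : 0 < eps * ln 2 by rewrite mulr_gt0 ?ln2_gt0.
case=> [x_le0|c_le0].
  by have := softplus_ge0 (x - c); rewrite /smooth_compl; lra.
by have := softplus_ge (x - c); rewrite /smooth_compl; lra.
Qed.

Lemma smooth_complE (x c : R) :
  smooth_compl x c -> x <= 2 * eps * ln 2 \/ c <= 2 * eps * ln 2.
Proof.
rewrite /smooth_compl => compl; have [xc|cx] := lerP x c.
  left; have := @softplus_le_ln2 (x - c); rewrite subr_le0 -mulrA => /(_ xc).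
  lra.
right; have := @softplus_le (x - c); rewrite subr_ge0 -mulrA => /(_ (ltW cx)).
lra.
Qed.

End Softplus.

Section SupInf.
Variables (R : realType) (T : Type) (d : T -> T -> R) (A B : set T).

Let sup_inf := ereal_sup [set ereal_inf [set (d p p')%:E | p' in B] | p in A].

Lemma sup_inf_ge0 (p0 : T) :
  A p0 -> (forall p p', 0 <= d p p') -> (0 <= sup_inf)%E.
Proof.
move=> Ap0 d_ge0; apply: le_ereal_sup_tmp.
exists (ereal_inf [set (d p0 p')%:E | p' in B]); first by exists p0.
by apply: le_ereal_inf_tmp => _ [p' _ <-]; rewrite lee_fin.
Qed.

Lemma sup_inf_le (r : R) :
  (forall p, A p -> exists2 p', B p' & d p p' <= r) -> (sup_inf <= r%:E)%E.
Proof.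
move=> near; apply: ge_ereal_sup => _ [p Ap <-].
have [p' Bp' dr] := near p Ap.
by apply: ge_ereal_inf; exists (d p p')%:E; [exists p' | rewrite lee_fin].
Qed.

End SupInf.

Section Plane.
Variable R : realType.

Lemma dist2_ge0 (p p' : R * R) : 0 <= dist2 p p'.
Proof. exact: sqrtr_ge0. Qed.

Lemma dist2_eq2 (p p' : R * R) : p.2 = p'.2 -> dist2 p p' = `|p.1 - p'.1|.
Proof. by move=> e; rewrite /dist2 e subrr expr0n /= addr0 sqrtr_sqr. Qed.

Lemma dist2_eq1 (p p' : R * R) : p.1 = p'.1 -> dist2 p p' = `|p.2 - p'.2|.
Proof. by move=> e; rewrite /dist2 e subrr expr0n /= add0r sqrtr_sqr. Qed.

End Plane.

Section Relaxation.
Variables (R : realType) (qlo qhi vlo vhi v0 : R).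

Lemma SepsP (eps : R) (p : R * R) :
  Seps qlo qhi vlo vhi v0 eps p <->
  exists vp vm : R,
    [/\ 0 <= vp <= vhi - vlo, 0 <= vm <= vhi - vlo, p.2 = v0 + vp - vm,
        smooth_compl eps vp (p.1 - qlo) & smooth_compl eps vm (qhi - p.1)]
    /\ (qlo <= p.1 <= qhi) /\ (vlo <= p.2 <= vhi).
Proof.
rewrite /Seps /smooth_compl /softplus /=.
have Ep x : x - (p.1 - qlo) = x - p.1 + qlo by rewrite opprB addrA addrAC.
have Em x : x - (qhi - p.1) = x + p.1 - qhi by rewrite opprB addrA.
split.
  by move=> [vp [vm [? [? [? [? [? ?]]]]]]]; exists vp, vm; rewrite Ep Em.
by move=> [vp [vm [[? ? ? cp cm] ?]]]; exists vp, vm; rewrite Ep Em in cp cm.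
Qed.

Lemma Sset_sub_Seps (eps : R) :
  qlo <= qhi -> vlo <= v0 <= vhi -> 0 < eps ->
  Sset qlo qhi vlo vhi v0 `<=` Seps qlo qhi vlo vhi v0 eps.
Proof.
move=> qlo_le_qhi /andP[vlo_le_v0 v0_le_vhi] eps_gt0 [q v] S_qv.
apply/SepsP => /=; have compl := smooth_complI eps_gt0.
case: S_qv => /= [[/andP[? ?] ->]|[[-> /andP[? ?]]|[-> /andP[? ?]]]];
  [exists 0, 0 | exists 0, (v0 - v) | exists (v - v0), 0];
  do ?[split | apply/andP; split]; try lra.
all: by apply: compl; first [left; lra | right; lra].
Qed.

Lemma Seps_near_Sset (eps : R) (p : R * R) : 0 < eps ->
  Seps qlo qhi vlo vhi v0 eps p ->
  exists2 p', Sset qlo qhi vlo vhi v0 p' & dist2 p p' <= 2 * eps * ln 2.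
Proof.
move: p => [q v] eps_gt0 /SepsP[vp [vm []]] /=.
case=> /andP[vp_ge0 _] /andP[vm_ge0 _] v_def compl_p compl_m.
case=> /andP[qlo_q q_qhi] /andP[vlo_v v_vhi].
have e_ln2 : 0 <= 2 * eps * ln 2 by rewrite !mulr_ge0 ?ltW ?ln2_gt0.
have [v0_le_v|v_lt_v0] := lerP v0 v.
- case: (smooth_complE eps_gt0 compl_p) => [vp_small|q_near_qlo].
    exists (q, v0); first by left => /=; rewrite qlo_q q_qhi.
    by rewrite dist2_eq1 //= ger0_norm; lra.
  exists (qlo, v); first by right; right => /=; rewrite v0_le_v v_vhi.
  by rewrite dist2_eq2 //= ger0_norm; lra.
- case: (smooth_complE eps_gt0 compl_m) => [vm_small|q_near_qhi].
    exists (q, v0); first by left => /=; rewrite qlo_q q_qhi.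
    by rewrite dist2_eq1 //= ler0_norm; lra.
  exists (qhi, v); first by right; left => /=; rewrite vlo_v ltW.
  by rewrite dist2_eq2 //= ler0_norm; lra.
Qed.

Lemma deviation_bounds (eps : R) :
  qlo <= qhi -> vlo <= v0 <= vhi -> 0 < eps ->
  (0 <= deviation qlo qhi vlo vhi v0 eps <= (2 * eps * ln 2)%:E)%E.
Proof.
move=> qlo_le_qhi v0_in eps_gt0; apply/andP; split.
  apply: (@sup_inf_ge0 _ _ _ _ _ (qlo, v0)) => [|p p']; last exact: dist2_ge0.
  by apply: Sset_sub_Seps => //; left => /=; rewrite lexx qlo_le_qhi.
by apply: sup_inf_le => p; apply: Seps_near_Sset.
Qed.

End Relaxation.

Theorem proposition2 (R : realType) (qlo qhi vlo vhi v0 : R) :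
  qlo <= qhi -> vlo <= vhi -> vlo <= v0 <= vhi ->
  (forall eps : R, 0 < eps ->
     Sset qlo qhi vlo vhi v0 `<=` Seps qlo qhi vlo vhi v0 eps) /\
  (deviation qlo qhi vlo vhi v0 eps @[eps --> 0^'+] --> 0%E).
Proof.
move=> qlo_le_qhi _ v0_in.
split=> [eps|]; first exact: Sset_sub_Seps.
apply: (squeeze_cvge (f := fun=> 0%E)
                     (h := fun eps : R => (2 * eps * ln 2)%:E)).
- near=> eps; apply: deviation_bounds => //; near: eps; exact: nbhs_right_gt.
- exact: cvg_cst.
- apply: cvg_EFin; first by near=> eps.
  apply: cvg_at_right_filter.
  have := cvgMr_tmp (b := ln (2 : R))
    (cvgMl_tmp (a := 2 : R) (@cvg_id _ (nbhs (0 : R)))).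
  by rewrite mulr0 mul0r; apply.
Unshelve. all: by end_near.
Qed.
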